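(* In the setting of the context, assume every irreducible $T$-module is thin, and let $\mathbf{C}\in T$ be the unique element satisfying $\mathbf{A}+\frac{q\mathbf{B}\mathbf{C}-q^{-1}\mathbf{C}\mathbf{B}}{q^2-q^{-2}}=\frac{(\mathbf{a}+\mathbf{a}^{-1})(\Lambda+\Lambda^{-1})+(\mathbf{b}+\mathbf{b}^{-1})(\mathbf{c}+\mathbf{c}^{-1})}{q+q^{-1}}$, $\mathbf{B}+\frac{q\mathbf{C}\mathbf{A}-q^{-1}\mathbf{A}\mathbf{C}}{q^2-q^{-2}}=\frac{(\mathbf{b}+\mathbf{b}^{-1})(\Lambda+\Lambda^{-1})+(\mathbf{c}+\mathbf{c}^{-1})(\mathbf{a}+\mathbf{a}^{-1})}{q+q^{-1}}$ and $\mathbf{C}+\frac{q\mathbf{A}\mathbf{B}-q^{-1}\mathbf{B}\mathbf{A}}{q^2-q^{-2}}=\frac{(\mathbf{c}+\mathbf{c}^{-1})(\Lambda+\Lambda^{-1})+(\mathbf{a}+\mathbf{a}^{-1})(\mathbf{b}+\mathbf{b}^{-1})}{q+q^{-1}}$. Then the standard module $V=\mathbb{C}^X$ becomes a $\Delta_q$-module on which the generators $\mathcal{A},\mathcal{B},\mathcal{C}$ act as $\mathbf{A},\mathbf{B},\mathbf{C}$ respectively.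
   Context: The universal Askey–Wilson algebra $\Delta_q$ is the associative unital $\mathbb{C}$-algebra with generators $\mathcal{A},\mathcal{B},\mathcal{C}$ and relations asserting that each of $\mathcal{A}+\frac{q\mathcal{B}\mathcal{C}-q^{-1}\mathcal{C}\mathcal{B}}{q^2-q^{-2}}$, $\mathcal{B}+\frac{q\mathcal{C}\mathcal{A}-q^{-1}\mathcal{A}\mathcal{C}}{q^2-q^{-2}}$, $\mathcal{C}+\frac{q\mathcal{A}\mathcal{B}-q^{-1}\mathcal{B}\mathcal{A}}{q^2-q^{-2}}$ is central. Fix a nonzero $q\in\mathbb{C}$ with $q^4\neq1$. Let $\Gamma$ be a finite connected distance-regular graph (undirected, no loops or multiple edges) with vertex set $X$, distance $\partial$, diameter $D\ge3$; $V=\mathbb{C}^X$. $A$ is the adjacency matrix, $E_0,\dots,E_D$ the primitive idempotents of the Bose–Mesner algebra with $E_0=|X|^{-1}J$ and $E_1,\dots,E_D$ a $Q$-polynomial ordering; $A=\sum\theta_iE_i$. Fix a vertex $x$; $E_i^*$ is the diagonal $0/1$ matrix projecting onto vertices at distance $i$ from $x$; $A^*$ is diagonal with $(y,y)$-entry $|X|(E_1)_{xy}$, $A^*=\sum\theta_i^*E_i^*$; $T$ is the algebra generated by $A,A^*$. Assume $q$-Racah type: $\theta_i=w+uq^{2i-D}+vq^{D-2i}$, $\theta_i^*=w^*+u^*q^{2i-D}+v^*q^{D-2i}$, $u,u^*,v,v^*\neq0$; fix $a,b$ with $a^2=u/v$, $b^2=u^*/v^*$; $\mathbf{A}=(A-wI)/(av)$,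 $\mathbf{B}=(A^*-w^*I)/(bv^* )$. For an irreducible $T$-module $W\subseteq V$: endpoint $\rho=\min\{i:E_i^*W\ne0\}$, dual endpoint $\tau=\min\{i:E_iW\neq0\}$, diameter $d=|\{i:E^*_iW\ne0\}|-1$; thin means $\dim E^*_iW\le1$ for all $i$. Put $a(W)=aq^{2\tau+d-D}$, $b(W)=bq^{2\rho+d-D}$. If $W$ is thin, $(\mathbf{A}|_W,\{E_{\tau+i}|_W\}_{i=0}^d,\mathbf{B}|_W,\{E^*_{\rho+i}|_W\}_{i=0}^d)$ is a Leonard system with eigenvalues $\vartheta_i=a(W)q^{2i-d}+a(W)^{-1}q^{d-2i}$ and dual eigenvalues $\vartheta^*_i=b(W)q^{2i-d}+b(W)^{-1}q^{d-2i}$; let $\kappa=0$ if $d=0$ and, for $d\ge1$, $\kappa=a(W)b(W)^{-1}q^{d-1}+a(W)^{-1}b(W)q^{1-d}+\phi_1/((q-q^{-1})(q^d-q^{-d}))$ where $\phi_1=(\vartheta^*_0-\vartheta^*_1)(\mathrm{trace}(E^*_\rho\mathbf{A}|_W)-\vartheta_d)$; $c(W)$ is a root of $\xi^2-\kappa\xi+1=0$ (defined up to reciprocal). Isomorphism of irreducible modules: linear bijection commuting with $T$; $\Psi$ = set of types; for $\psi\in\Psi$, $a(\psi),b(\psi),d(\psi),c(\psi)$ are $a(W),b(W)$, the diameter, and (a fixed choice of) $c(W)$ for $W$ of type $\psi$. $V_\psi$ = span of irreducible modules of type $\psi$, $V=\bigoplus_\psi V_\psi$, $e_\psi$ = identity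 on $V_\psi$, $0$ on other $V_\lambda$. Define $\mathbf{a}=\sum_\psi a(\psi)e_\psi$, $\mathbf{b}=\sum_\psi b(\psi)e_\psi$, $\mathbf{c}=\sum_\psi c(\psi)e_\psi$, $\Lambda=\sum_\psi q^{d(\psi)+1}e_\psi$ (these are invertible). *)

(* Complex numbers are modelled as R[i] = complex R for an
   arbitrary real closed field R (R = the reals gives C). *)
From HB Require Import structures.
From mathcomp Require Import all_boot all_order all_algebra.

Set Implicit Arguments. Unset Strict Implicit. Unset Printing Implicit Defensive.
Import Order.TTheory GRing.Theory Num.Theory.
Local Open Scope ring_scope.

Section Graph.
Variables (n : nat) (e : rel 'I_n).

Fixpoint ball (k : nat) (x : 'I_n) : {set 'I_n} :=
  match k with
  | 0 => [set x]
  | k'.+1 => ball k' x :|: [set y | [exists z in ball k' x, e z y]]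
  end.

(* path-length distance: the least k with y in ball k x
   (for a connected graph on n vertices this is < n) *)
Definition dist (x y : 'I_n) : nat :=
  find (fun k => y \in ball k x) (iota 0 n).

Definition simple_graph : Prop := symmetric e /\ irreflexive e.

Definition connected_graph : Prop := forall x y, connect e x y.

Definition distance_regular : Prop :=
  exists p : nat -> nat -> nat -> nat, forall (h i j : nat) (x y : 'I_n),
    dist x y = h ->
    #|[set z | (dist x z == i) && (dist y z == j)]| = p h i j.

Definition has_diameter (D : nat) : Prop :=
  (forall x y, (dist x y <= D)%N) /\ (exists x y, dist x y = D).

End Graph.

(* Vectors of V = F^X are row vectors; a matrix M acts on V by          *)
(* v |-> v *m M^T (i.e. the usual action M v on column vectors).        *)
(* A subspace W of V is represented by a square matrix whose row space  *)
(* is W.                                                                *)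
Section Matrices.
Variables (F : fieldType) (n : nat) (e : rel 'I_n).

Definition adjmx : 'M[F]_n := \matrix_(y, z) (e y z)%:R.

Definition distmx (i : nat) : 'M[F]_n := \matrix_(y, z) (dist e y z == i)%:R.

Definition hadamard (P Q : 'M[F]_n) : 'M[F]_n := \matrix_(y, z) (P y z * Q y z).

Definition in_BM (D : nat) (M : 'M[F]_n) : Prop :=
  exists c : nat -> F, M = \sum_(k < D.+1) c k *: distmx k.

(* E_0..E_D are the primitive idempotents of M: nonzero pairwise
   orthogonal idempotents of M summing to the identity (M has dimension
   D+1, so these are exactly the primitive idempotents) *)
Definition BM_primitive_idempotents (D : nat) (E : nat -> 'M[F]_n) : Prop :=
  [/\ forall i, (i <= D)%N -> in_BM D (E i),
      forall i j, (i <= D)%N -> (j <= D)%N ->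
        E i *m E j = (if i == j then E i else 0),
      forall i, (i <= D)%N -> E i != 0
    & \sum_(i < D.+1) E i = 1%:M].

(* Q-polynomial ordering, via the Krein parameters q^h_{ij} defined by
   E_i o E_j = |X|^{-1} sum_h q^h_{ij} E_h :  q^h_{ij} = 0 when one of
   h,i,j exceeds the sum of the other two, and q^h_{ij} <> 0 when one of
   them equals the sum of the other two. *)
Definition Q_polynomial (D : nat) (E : nat -> 'M[F]_n) : Prop :=
  forall i j, (i <= D)%N -> (j <= D)%N ->
  exists qc : nat -> F,
    hadamard (E i) (E j) = n%:R^-1 *: \sum_(h < D.+1) qc h *: E h /\
    forall h, (h <= D)%N ->
      ((i + j < h)%N || (h + i < j)%N || (h + j < i)%N -> qc h = 0) /\
      ((h == i + j) || (i == h + j) || (j == h + i) -> qc h != 0).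

Definition Estar (x : 'I_n) (i : nat) : 'M[F]_n :=
  diag_mx (\row_y (dist e x y == i)%:R).

Definition Astar (x : 'I_n) (E : nat -> 'M[F]_n) : 'M[F]_n :=
  diag_mx (\row_y (n%:R * E 1%N x y)).

Inductive gen_alg (S : seq 'M[F]_n) : 'M[F]_n -> Prop :=
  | gen_alg_gen M : M \in S -> gen_alg S M
  | gen_alg_one : gen_alg S 1%:M
  | gen_alg_add M N : gen_alg S M -> gen_alg S N -> gen_alg S (M + N)
  | gen_alg_scale (c : F) M : gen_alg S M -> gen_alg S (c *: M)
  | gen_alg_mul M N : gen_alg S M -> gen_alg S N -> gen_alg S (M *m N).

Definition Talg (x : 'I_n) (E : nat -> 'M[F]_n) : 'M[F]_n -> Prop :=
  gen_alg [:: adjmx; Astar x E].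

Section Modules.
Variable inT : 'M[F]_n -> Prop.

Definition is_module (W : 'M[F]_n) : Prop :=
  forall M, inT M -> (W *m M^T <= W)%MS.

Definition irreducible_module (W : 'M[F]_n) : Prop :=
  [/\ W != 0, is_module W &
      forall U : 'M[F]_n, (U <= W)%MS -> is_module U -> U = 0 \/ (W <= U)%MS].

(* isomorphism of modules: a linear bijection W -> W' (induced by some
   P : V -> V) commuting with the action of T *)
Definition iso_modules (W W' : 'M[F]_n) : Prop :=
  exists P : 'M[F]_n,
    [/\ (W *m P == W')%MS, \rank (W *m P) = \rank W &
        forall M, inT M -> W *m M^T *m P = W *m P *m M^T].
End Modules.

Definition acts_as_scalar (W M : 'M[F]_n) (c : F) : Prop :=
  W *m M^T = c *: W.

Definition restr_trace (W M : 'M[F]_n) : F :=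
  \tr (row_base W *m M^T *m pinvmx (row_base W)).

Section Params.
Variables (x : 'I_n) (E : nat -> 'M[F]_n) (D : nat).

Definition nz_sub (W M : 'M[F]_n) : bool := W *m M^T != 0.

Definition endpoint (W : 'M[F]_n) : nat :=
  find (fun i => nz_sub W (Estar x i)) (iota 0 D.+1).
Definition dual_endpoint (W : 'M[F]_n) : nat :=
  find (fun i => nz_sub W (E i)) (iota 0 D.+1).
Definition mod_diameter (W : 'M[F]_n) : nat :=
  (count (fun i => nz_sub W (Estar x i)) (iota 0 D.+1)).-1.

Definition thin (W : 'M[F]_n) : Prop :=
  forall i, (\rank (W *m (Estar x i)^T) <= 1)%N.

Variables (q a b : F) (Abold : 'M[F]_n).

Definition zd (m k : nat) : int := Posz m - Posz k.

Definition aW (W : 'M[F]_n) : F :=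
  a * q ^ zd (2 * dual_endpoint W + mod_diameter W) D.
Definition bW (W : 'M[F]_n) : F :=
  b * q ^ zd (2 * endpoint W + mod_diameter W) D.

Definition thW (W : 'M[F]_n) (i : nat) : F :=
  aW W * q ^ zd (2 * i) (mod_diameter W)
  + (aW W)^-1 * q ^ zd (mod_diameter W) (2 * i).
Definition thsW (W : 'M[F]_n) (i : nat) : F :=
  bW W * q ^ zd (2 * i) (mod_diameter W)
  + (bW W)^-1 * q ^ zd (mod_diameter W) (2 * i).

Definition phi1W (W : 'M[F]_n) : F :=
  (thsW W 0 - thsW W 1) *
  (restr_trace W (Estar x (endpoint W) *m Abold) - thW W (mod_diameter W)).

Definition kappaW (W : 'M[F]_n) : F :=
  let d := mod_diameter W in
  if d == 0%N then 0 else
    aW W / bW W * q ^+ d.-1 + bW W / aW W * q ^- d.-1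
    + phi1W W / ((q - q^-1) * (q ^+ d - q ^- d)).

Definition is_abold (ab : 'M[F]_n) : Prop :=
  forall W, irreducible_module (Talg x E) W -> acts_as_scalar W ab (aW W).
Definition is_bbold (bb : 'M[F]_n) : Prop :=
  forall W, irreducible_module (Talg x E) W -> acts_as_scalar W bb (bW W).
Definition is_Lambda (L : 'M[F]_n) : Prop :=
  forall W, irreducible_module (Talg x E) W ->
    acts_as_scalar W L (q ^+ (mod_diameter W).+1).
Definition is_cbold (cb : 'M[F]_n) : Prop :=
  exists cf : 'M[F]_n -> F,
    (forall W W', irreducible_module (Talg x E) W ->
       irreducible_module (Talg x E) W' -> iso_modules (Talg x E) W W' ->
       cf W = cf W') /\
    (forall W, irreducible_module (Talg x E) W ->
       cf W ^+ 2 - kappaW W * cf W + 1 = 0 /\ acts_as_scalar W cb (cf W)).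
End Params.

Definition Abold (w a v : F) : 'M[F]_n := (a * v)^-1 *: (adjmx - w *: 1%:M).
Definition Bbold (x : 'I_n) (E : nat -> 'M[F]_n) (ws b vs : F) : 'M[F]_n :=
  (b * vs)^-1 *: (Astar x E - ws *: 1%:M).

End Matrices.

Definition aw_expr (F : fieldType) (n : nat) (q : F) (X Y Z : 'M[F]_n) :=
  X + (q ^+ 2 - q ^- 2)^-1 *: (q *: (Y *m Z) - q^-1 *: (Z *m Y)).

Definition commute_mx (F : fieldType) (n : nat) (P Q : 'M[F]_n) : Prop :=
  P *m Q = Q *m P.

(* V is a Delta_q-module with generators acting as A, B, C: the images of
   the three (central) Askey-Wilson elements commute with A, B and C,
   i.e. they are central in the image of Delta_q. *)
Definition Deltaq_module (F : fieldType) (n : nat) (q : F) (A B C : 'M[F]_n) : Prop :=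
  forall O, O \in [:: aw_expr q A B C; aw_expr q B C A; aw_expr q C A B] ->
  [/\ commute_mx O A, commute_mx O B & commute_mx O C].

Definition plus_inv (F : fieldType) (n : nat) (U : 'M[F]_n) : 'M[F]_n :=
  U + invmx U.

Arguments adjmx {F n} e.
Arguments distmx {F n} e i.

From HB Require Import structures.
From mathcomp Require Import all_boot all_order all_algebra.
From mathcomp Require Import complex.
From mathcomp Require Import zify.
From Stdlib Require Import Classical.
Import Order.TTheory GRing.Theory Num.Theory.
Local Open Scope ring_scope.

(* Each of a, b, c and Lambda acts as a scalar on every irreducible T-module.
   The algebra generated by A, A* and the complex conjugate of A* is closed
   under conjugate transposition (A is a real symmetric 0/1 matrix, A* is
   diagonal), and has the same submodules as T because the conjugate of a
   diagonal matrix is a polynomial in it.  Hence V is an orthogonal direct sum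
   of irreducible T-modules, so a, b, c and Lambda commute with T.  The three
   right-hand sides are built from these matrices, so the three Askey-Wilson
   elements commute with A, B and C, which all lie in T. *)

Section GeneratedAlgebra.
Variables (F : fieldType) (n : nat).
Implicit Types (S : seq 'M[F]_n) (T : 'M[F]_n -> Prop) (U W M : 'M[F]_n).

Lemma gen_alg_subset S S' M : {subset S <= S'} -> gen_alg S M -> gen_alg S' M.
Proof.
move=> sSS'; elim=> {M} [M /sSS'|||c M _ IH|M N _ IH1 _ IH2].
- exact: gen_alg_gen.
- exact: gen_alg_one.
- by move=> M N _ IH1 _ IH2; apply: gen_alg_add.
- exact: gen_alg_scale.
- exact: gen_alg_mul.
Qed.

Lemma gen_alg_affine S M c d :
  gen_alg S M -> gen_alg S (c *: (M - d *: 1%:M)).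
Proof.
move=> SM; apply: gen_alg_scale; rewrite -scaleNr.
by apply: gen_alg_add => //; apply/gen_alg_scale/gen_alg_one.
Qed.

Lemma gen_alg_module S W :
  (forall G, G \in S -> (W *m G^T <= W)%MS) -> is_module (gen_alg S) W.
Proof.
move=> stabS M; elim=> {M} [M /stabS //||M N _ IH1 _ IH2|c M _ IH|M N _ IH1 _ IH2].
- by rewrite trmx1 mulmx1.
- by rewrite linearD /= mulmxDr addmx_sub.
- by rewrite linearZ /= -scalemxAr scalemx_sub.
- by rewrite trmx_mul mulmxA (submx_trans (submxMr _ IH2)).
Qed.

Lemma capmx_module T U W :
  is_module T U -> is_module T W -> is_module T (U :&: W)%MS.
Proof.
move=> modU modW M TM; rewrite sub_capmx.
by rewrite (submx_trans (submxMr _ (capmxSl _ _)) (modU M TM))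
           (submx_trans (submxMr _ (capmxSr _ _)) (modW M TM)).
Qed.

Lemma exists_irreducible_submodule T U : is_module T U -> U != 0 ->
  exists2 W, irreducible_module T W & (W <= U)%MS.
Proof.
have [k] := ubnP (\rank U); elim: k U => // k IH U ltU modU nzU.
have [irrU|nirrU] := classic (irreducible_module T U); first by exists U.
have [U1 [sU1U modU1 nzU1 nsUU1]] :
    exists U1, [/\ (U1 <= U)%MS, is_module T U1, U1 != 0 & ~~ (U <= U1)%MS].
  apply: NNPP => noU1; apply: nirrU; split=> // U1 sU1U modU1.
  have [->|nzU1] := eqVneq U1 0; [by left|right].
  by apply: NNPP => /negP nsUU1; apply: noU1; exists U1.
have ltU1U : (\rank U1 < \rank U)%N.
  by rewrite ltn_neqAle mxrankS // andbT; have [_ ->] := mxrank_leqif_sup sU1U.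
have [W irrW sWU1] := IH U1 (leq_trans ltU1U (ltnSE ltU)) modU1 nzU1.
by exists W => //; apply: submx_trans sWU1 sU1U.
Qed.

End GeneratedAlgebra.

Arguments exists_irreducible_submodule {F n T U}.

Section ConjugateClosed.
Variables (C : numClosedFieldType) (n : nat).
Implicit Types (U W M G : 'M[C]_n).

Local Notation conjmx M := (map_mx Num.Def.conjC M).
Local Notation orth W := (orthomx Num.Def.conjC (hermitian1mx n) W).

Lemma orthomx_stable W G :
  (W *m conjmx G <= W)%MS -> (orth W *m G^T <= orth W)%MS.
Proof.
case/submxP=> Y defWG; rewrite orthomx1E -mulmxA.
have -> : G^T *m conjmx W^T = conjmx (W *m conjmx G)^T.
  rewrite trmx_mul map_mxM; congr (_ *m _).
  by apply/matrixP=> i j; rewrite !mxE; exact: (esym (conjCK _)).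
have /eqP orthW0 : orth W *m conjmx W^T == 0 by rewrite -orthomx1E.
by rewrite defWG trmx_mul map_mxM mulmxA orthW0 mul0mx.
Qed.

Lemma sub_addmx_cap_orthomx W U :
  (W <= U)%MS -> (U <= W + (U :&: orth W))%MS.
Proof.
move=> sWU; set U' := (U :&: orth W)%MS.
have sWU'U : (W + U' <= U)%MS by rewrite addsmx_sub sWU capmxSl.
have [_ <-] := mxrank_leqif_sup sWU'U; rewrite eqn_leq mxrankS //=.
have rkWU' : \rank (W :&: U')%MS = 0%N.
  apply/eqP; rewrite -leqn0 -(mxrank0 C n n) -(orthomx_ortho_disj W).
  by rewrite mxrankS // capmxS // capmxSr.
have := mxrank_sum_cap W U'; have := mxrank_sum_cap U (orth W).
have := rank_ortho W; have := rank_leq_col (U + orth W)%MS.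
have := rank_leq_col W; rewrite -/U'; lia.
Qed.

Variable S : seq 'M[C]_n.
Hypothesis S_adjoint_closed : forall G, G \in S -> (conjmx G)^T \in S.

Lemma orthomx_module W : is_module (gen_alg S) W -> is_module (gen_alg S) (orth W).
Proof.
move=> modW; apply: gen_alg_module => G SG; apply: orthomx_stable.
by have := modW _ (gen_alg_gen (S_adjoint_closed _ SG)); rewrite trmxK.
Qed.

(* Complete reducibility: peel off an irreducible submodule and recurse on
   its orthogonal complement inside U. *)
Lemma module_sub_kermx (K : 'M[C]_n) :
  (forall W, irreducible_module (gen_alg S) W -> (W <= kermx K)%MS) ->
  forall U, is_module (gen_alg S) U -> (U <= kermx K)%MS.
Proof.
move=> irrK U; have [k] := ubnP (\rank U); elim: k U => // k IH U ltU modU.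
have [->|nzU] := eqVneq U 0; first by rewrite sub0mx.
have [W irrW sWU] := exists_irreducible_submodule modU nzU.
have [nzW modW _] := irrW.
set U' := (U :&: orth W)%MS.
have modU' : is_module (gen_alg S) U' by apply/capmx_module/orthomx_module.
have ltU'U : (\rank U' < \rank U)%N.
  rewrite ltn_neqAle mxrankS ?capmxSl // andbT.
  have [_ ->] := mxrank_leqif_sup (capmxSl U (orth W)).
  apply: contra nzW => sUU'; rewrite -submx0 -(orthomx_ortho_disj W).
  by rewrite sub_capmx submx_refl (submx_trans sWU (submx_trans sUU' (capmxSr _ _))).
apply: submx_trans (@sub_addmx_cap_orthomx W U sWU) _.
by rewrite addsmx_sub irrK // IH // (leq_trans ltU'U (ltnSE ltU)).
Qed.

Lemma comm_mx_of_scalar_on_irreducibles M :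
  (forall W, irreducible_module (gen_alg S) W -> exists c, acts_as_scalar W M c) ->
  forall G, gen_alg S G -> comm_mx G M.
Proof.
move=> scalarM G SG; set K := G^T *m M^T - M^T *m G^T.
suff /sub_kermxP : (1%:M <= kermx K)%MS.
  rewrite mul1mx => /eqP; rewrite subr_eq0 -!trmx_mul => /eqP /trmx_inj.
  by rewrite /comm_mx => ->.
apply: module_sub_kermx => [W irrW|M' _]; last by rewrite submx1.
have [c actM] := scalarM W irrW; have [_ modW _] := irrW.
have /submxP [X defWG] := modW G SG.
apply/sub_kermxP; rewrite /K mulmxBr !mulmxA defWG -(mulmxA X) actM.
by rewrite -scalemxAr -scalemxAl -defWG subrr.
Qed.

End ConjugateClosed.

Lemma exists_interpolating_poly (F : fieldType) (s : seq F) (f : F -> F) :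
  exists p : {poly F}, {in s, forall t, p.[t] = f t}.
Proof.
elim: s => [|t s [p hp]]; first by exists 0.
have [ts|nts] := boolP (t \in s).
  by exists p => u; rewrite inE => /predU1P [->|/hp //]; exact: hp.
pose r := \prod_(u <- s) ('X - u%:P).
have rt_neq0 : r.[t] != 0.
  rewrite horner_prod prodf_seq_neq0; apply/allP => u us /=.
  by rewrite hornerXsubC subr_eq0; apply: contraNneq nts => ->.
exists (p + ((f t - p.[t]) / r.[t]) *: r) => u; rewrite inE => /predU1P [->|us].
  by rewrite hornerD hornerZ divfK // addrC subrK.
have ru0 : r.[u] = 0 by rewrite horner_prod (big_rem u us) /= hornerXsubC subrr mul0r.
by rewrite hornerD hornerZ ru0 mulr0 addr0 hp.
Qed.

(* A subspace stable under diag_mx d is stable under diag_mx (f o d) for any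
   f, since f agrees with a polynomial on the finitely many entries of d. *)
Lemma stablemx_diag_map (F : fieldType) n (W : 'M[F]_n) (d : 'rV[F]_n) (f : F -> F) :
  (W *m diag_mx d <= W)%MS -> (W *m diag_mx (map_mx f d) <= W)%MS.
Proof.
move=> stab_d; have [p hp] := @exists_interpolating_poly F [seq d 0 i | i <- enum 'I_n] f.
have -> : map_mx f d = map_mx (horner p) d.
  by apply/rowP => i; rewrite !mxE hp //; apply: map_f; rewrite mem_enum.
elim/poly_ind: p {hp} => [|p c IH].
  have -> : diag_mx (map_mx (horner 0) d) = 0.
    by apply/matrixP => i j; rewrite !mxE horner0 mul0rn.
  by rewrite mulmx0 sub0mx.
have -> : diag_mx (map_mx (horner (p * 'X + c%:P)) d)
          = diag_mx (map_mx (horner p) d) *m diag_mx d + c%:M.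
  apply/matrixP => i j; rewrite mul_diag_mx !mxE hornerMXaddC.
  by case: (i == j); rewrite ?mulr1n ?mulr0n ?mulr0 ?addr0.
rewrite mulmxDr addmx_sub ?mul_mx_scalar ?scalemx_sub // mulmxA.
exact: submx_trans (submxMr _ IH) stab_d.
Qed.

Section TerwilligerAlgebra.
Variables (C : numClosedFieldType) (n : nat) (e : rel 'I_n).
Variables (x : 'I_n) (E : nat -> 'M[C]_n).
Hypothesis e_sym : symmetric e.

Local Notation conjmx M := (map_mx Num.Def.conjC M).
Local Notation S := [:: adjmx e; Astar x E; conjmx (Astar x E)].

Lemma Talg_generators_adjoint_closed G : G \in S -> (conjmx G)^T \in S.
Proof.
have adj_sym : (conjmx (adjmx e))^T = adjmx e :> 'M[C]_n.
  by apply/matrixP => i j; rewrite !mxE rmorph_nat e_sym.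
rewrite !inE => /or3P [] /eqP ->.
- by rewrite adj_sym eqxx.
- by rewrite map_diag_mx tr_diag_mx eqxx !orbT.
- have -> : conjmx (conjmx (Astar x E)) = Astar x E.
    by apply/matrixP => i j; rewrite !mxE conjCK.
  by rewrite tr_diag_mx eqxx orbT.
Qed.

Lemma Talg_module_gen W : is_module (Talg e x E) W -> is_module (gen_alg S) W.
Proof.
move=> modW; apply: gen_alg_module => G; rewrite !inE => /or3P [] /eqP ->.
- by apply/modW/gen_alg_gen; rewrite inE eqxx.
- by apply/modW/gen_alg_gen; rewrite !inE eqxx orbT.
- rewrite map_diag_mx tr_diag_mx; apply: stablemx_diag_map.
  have := modW (Astar x E) (gen_alg_gen _); rewrite tr_diag_mx; apply.
  by rewrite !inE eqxx orbT.
Qed.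

Lemma Talg_sub_gen G : Talg e x E G -> gen_alg S G.
Proof. by apply: gen_alg_subset => G'; rewrite !inE => /orP [] ->; rewrite ?orbT. Qed.

Lemma irreducible_gen_Talg W :
  irreducible_module (gen_alg S) W -> irreducible_module (Talg e x E) W.
Proof.
move=> [nzW modW minW]; split=> // [M /Talg_sub_gen /modW //|U sUW].
by move/Talg_module_gen; apply: minW.
Qed.

Lemma Talg_comm_of_scalar_on_irreducibles M :
  (forall W, irreducible_module (Talg e x E) W -> exists c, acts_as_scalar W M c) ->
  forall G, Talg e x E G -> comm_mx G M.
Proof.
move=> scalarM G /Talg_sub_gen; apply: comm_mx_of_scalar_on_irreducibles.
  exact: Talg_generators_adjoint_closed.
by move=> W /irreducible_gen_Talg; apply: scalarM.
Qed.

End TerwilligerAlgebra.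

Arguments Talg_comm_of_scalar_on_irreducibles {C n e x E}.

Section Commutation.
Variables (F : fieldType) (n : nat).
Implicit Types (G X Y Z W : 'M[F]_n).

Lemma comm_mxZ G X c : comm_mx G X -> comm_mx G (c *: X).
Proof. by rewrite /comm_mx => commGX; rewrite -scalemxAl -commGX scalemxAr. Qed.

Lemma comm_mx_invmx G X : comm_mx G X -> comm_mx G (invmx X).
Proof.
rewrite /comm_mx => commGX; have [uX|nuX] := boolP (X \in unitmx); last first.
  by rewrite invmx_out.
by rewrite -[LHS](mulKmx uX) (mulmxA X) -commGX -(mulmxA G) mulmxV // mulmx1.
Qed.

Lemma comm_mx_plus_inv G X : comm_mx G X -> comm_mx G (plus_inv X).
Proof. by move=> commGX; apply: comm_mxD => //; apply: comm_mx_invmx. Qed.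

Lemma comm_mx_aw_rhs (q : F) G X Y Z W :
  comm_mx G X -> comm_mx G Y -> comm_mx G Z -> comm_mx G W ->
  comm_mx G ((q + q^-1)^-1 *: (plus_inv X *m plus_inv Y + plus_inv Z *m plus_inv W)).
Proof.
move=> cX cY cZ cW.
by apply/comm_mxZ/comm_mxD; apply: comm_mxM; apply: comm_mx_plus_inv.
Qed.

End Commutation.

Theorem theorem5p15 (R : rcfType) (n : nat) (e : rel 'I_n) (D : nat)
    (E : nat -> 'M[R[i]]_n) (x : 'I_n)
    (q w u v ws us vs a b : R[i])
    (ab bb cb Lb Cb : 'M[R[i]]_n) :
  simple_graph e -> connected_graph e -> distance_regular e ->
  has_diameter e D -> (3 <= D)%N ->
  BM_primitive_idempotents e D E ->
  E 0%N = (n%:R)^-1 *: const_mx 1 ->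
  Q_polynomial D E ->
  q != 0 -> q ^+ 4 != 1 ->
  u != 0 -> v != 0 -> us != 0 -> vs != 0 ->
  (* q-Racah type eigenvalues theta_i and dual eigenvalues theta*_i *)
  adjmx e = \sum_(i < D.+1)
     (w + u * q ^ zd (2 * i) D + v * q ^ zd D (2 * i)) *: E i ->
  (forall y : 'I_n, n%:R * E 1%N x y =
     ws + us * q ^ zd (2 * dist e x y) D + vs * q ^ zd D (2 * dist e x y)) ->
  a ^+ 2 = u / v -> b ^+ 2 = us / vs ->
  (* every irreducible T-module is thin *)
  (forall W, irreducible_module (Talg e x E) W -> thin e x W) ->
  is_abold e x E D q a ab ->
  is_bbold e x E D q b bb ->
  is_cbold e x E D q a b (Abold e w a v) cb ->
  is_Lambda e x E D q Lb ->
  Talg e x E Cb ->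
  aw_expr q (Abold e w a v) (Bbold x E ws b vs) Cb =
    (q + q^-1)^-1 *: (plus_inv ab *m plus_inv Lb + plus_inv bb *m plus_inv cb) ->
  aw_expr q (Bbold x E ws b vs) Cb (Abold e w a v) =
    (q + q^-1)^-1 *: (plus_inv bb *m plus_inv Lb + plus_inv cb *m plus_inv ab) ->
  aw_expr q Cb (Abold e w a v) (Bbold x E ws b vs) =
    (q + q^-1)^-1 *: (plus_inv cb *m plus_inv Lb + plus_inv ab *m plus_inv bb) ->
  Deltaq_module q (Abold e w a v) (Bbold x E ws b vs) Cb.
Proof.
move=> [e_sym _] _ _ _ _ _ _ _ _ _ _ _ _ _ _ _ _ _ _.
move=> actA actB [cf [_ actC]] actL TC defO1 defO2 defO3.
have central G : Talg e x E G ->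
    [/\ comm_mx G ab, comm_mx G bb, comm_mx G cb & comm_mx G Lb].
  move=> TG; split; apply: (Talg_comm_of_scalar_on_irreducibles e_sym _ _ _ TG) => W.
  - by move/actA=> actW; eexists; exact: actW.
  - by move/actB=> actW; eexists; exact: actW.
  - by case/actC=> _ actW; eexists; exact: actW.
  - by move/actL=> actW; eexists; exact: actW.
have TA : Talg e x E (Abold e w a v).
  by apply/gen_alg_affine/gen_alg_gen; rewrite inE eqxx.
have TB : Talg e x E (Bbold x E ws b vs).
  by apply/gen_alg_affine/gen_alg_gen; rewrite !inE eqxx orbT.
have comm_O G : Talg e x E G -> forall O,
    O \in [:: aw_expr q (Abold e w a v) (Bbold x E ws b vs) Cb;
              aw_expr q (Bbold x E ws b vs) Cb (Abold e w a v);
              aw_expr q Cb (Abold e w a v) (Bbold x E ws b vs)] -> comm_mx G O.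
  move=> /central[cA cB cC cL] O; rewrite !inE => /or3P [] /eqP ->;
    [rewrite defO1|rewrite defO2|rewrite defO3]; exact: comm_mx_aw_rhs.
by move=> O inO; split; apply/comm_mx_sym/comm_O.
Qed.
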